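(* Let $\mathcal{G}$ be a connected undirected graph with $n$ nodes, $m$ edges and incidence matrix $B$; let $p\ge1$, $E=\begin{bmatrix} I_{p}\\ \mathbf{0}_{(n-p)\times p}\end{bmatrix}$, $d\in\mathbb{R}^n$, $Q=\operatorname{diag}(q_1,\dots,q_p)$ with $q_i>0$, $r\in\mathbb{R}^p$, $s\in\mathbb{R}$ and $C(u)=\frac12u^TQu+r^Tu+s$. Let $h(x)=(h_1(x_1),\dots,h_n(x_n))^T$, let $B_c\in\mathbb{R}^{n\times l}$ be the incidence matrix of a (not necessarily connected) graph on the same node set, let $E_c\in\mathbb{R}^{n\times p_c}$ be a matrix whose columns are distinct standard unit vectors of $\mathbb{R}^n$, let $\gamma:\mathbb{R}^l\to\mathbb{R}^l$ and $\eta:\mathbb{R}^{p_c}\to\mathbb{R}^{p_c}$ act componentwise, and define $\Psi(x)=-B_c\gamma(B_c^Th(x))-E_c\eta(E_c^Th(x))$. Fix $\overline x\in\mathbb{R}^n$. Then the solution (in the variable $u$) of $$\min_{u,\lambda}C(u)\quad\text{subject to}\quad\mathbf{0}=\Psi(\overline x)-B\lambda+Eu-d$$ is given by $\hat u=Q^{-1}(\hat\kappa-r)$, where $\hat\kappa=E^T\frac{\mathbb{1}_n\mathbb{1}_n^T}{\mathbb{1}_p^TQ^{-1}\mathbb{1}_p}(\hat d+EQ^{-1}r)$ and $\hat d=d+E_c\eta(E_c^Th(\overline x))$.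
   Context: $\mathbb{1}_k$ is the all-ones vector of length $k$. An incidence matrix is obtained by arbitrarily orienting each edge: entry $(i,k)$ is $+1$ if node $i$ is the positive end of edge $k$, $-1$ if the negative end, $0$ otherwise. ''Acts componentwise'' means $\gamma(a)=(\gamma_1(a_1),\dots,\gamma_l(a_l))^T$ and similarly for $\eta$. *)

From HB Require Import structures.
From mathcomp Require Import all_boot all_order all_algebra.
Set Implicit Arguments. Unset Strict Implicit. Unset Printing Implicit Defensive.
Import Order.TTheory GRing.Theory Num.Theory.
Local Open Scope ring_scope.

(* A graph on node set 'I_n with m edges, each edge k given with an arbitrary
   orientation (e k).1 (positive end) -> (e k).2 (negative end). *)
Definition edge_list (n m : nat) := 'I_m -> 'I_n * 'I_n.

Definition simple_graph n m (e : edge_list n m) : Prop :=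
  (forall k, (e k).1 != (e k).2) /\
  (forall k k', k != k' ->
     e k' != e k /\ e k' != ((e k).2, (e k).1)).

Definition adjacent n m (e : edge_list n m) : rel 'I_n :=
  fun i j => [exists k, (e k == (i, j)) || (e k == (j, i))].

Definition connected_graph n m (e : edge_list n m) : Prop :=
  forall i j : 'I_n, connect (adjacent e) i j.

Definition incidence (R : nzRingType) n m (e : edge_list n m) : 'M[R]_(n, m) :=
  \matrix_(i, k) (if i == (e k).1 then 1 else if i == (e k).2 then -1 else 0).

Definition Emat (R : nzRingType) n p : 'M[R]_(n, p) :=
  \matrix_(i, j) (if (i : nat) == (j : nat) then 1 else 0).

Definition unit_cols (R : nzRingType) n pc (sel : 'I_pc -> 'I_n) : 'M[R]_(n, pc) :=
  \matrix_(i, j) (if i == sel j then 1 else 0).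

Definition compw (R : Type) k (f : 'I_k -> R -> R) (v : 'cV[R]_k) : 'cV[R]_k :=
  \col_i f i (v i ord0).

Definition ones (R : nzRingType) k : 'cV[R]_k := const_mx 1.

Definition costC (R : fieldType) p (Q : 'M[R]_p) (r : 'cV[R]_p) (s : R)
  (u : 'cV[R]_p) : R :=
  (u^T *m Q *m u) ord0 ord0 / 2 + (r^T *m u) ord0 ord0 + s.

Definition Psi (R : nzRingType) n l pc (Bc : 'M[R]_(n, l)) (Ec : 'M[R]_(n, pc))
  (h : 'I_n -> R -> R) (gamma : 'I_l -> R -> R) (eta : 'I_pc -> R -> R)
  (x : 'cV[R]_n) : 'cV[R]_n :=
  - (Bc *m compw gamma (Bc^T *m compw h x)) - (Ec *m compw eta (Ec^T *m compw h x)).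

From HB Require Import structures.
From mathcomp Require Import all_boot all_order all_algebra.
From mathcomp Require Import zify ring.
Import Order.TTheory GRing.Theory Num.Theory.
Set Implicit Arguments. Unset Strict Implicit. Unset Printing Implicit Defensive.
Local Open Scope ring_scope.

(* Since 1^T B = 0 and, by connectivity, the left kernel of B is spanned by 1,
   the range of B is the hyperplane 1^T v = 0.  As also 1^T B_c = 0 and
   1^T E = 1^T, the constraint is solvable in lambda exactly when
   1^T u = 1^T dhat.  On that hyperplane the separable cost equals
   C(uhat) + sum_j q_j (u_j - uhat_j)^2 / 2, where uhat is the Lagrange point
   (q_j uhat_j + r_j constant), so uhat is the unique minimizer; kappahat is
   that constant written in matrix form. *)

Definition loopless n m (e : edge_list n m) := forall k, (e k).1 != (e k).2.

Lemma simple_graph_loopless n m (e : edge_list n m) : simple_graph e -> loopless e.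
Proof. by case. Qed.

Lemma sum_col_onesE (R : nzRingType) k (v : 'cV[R]_k) :
  \sum_i v i 0 = ((ones R k)^T *m v) 0 0.
Proof. by rewrite mxE; apply: eq_bigr => i _; rewrite !mxE mul1r. Qed.

Lemma sum_colD (R : nzRingType) k (u v : 'cV[R]_k) :
  \sum_i (u + v) i 0 = \sum_i u i 0 + \sum_i v i 0.
Proof. by rewrite -big_split; apply: eq_bigr => i _; rewrite mxE. Qed.

Lemma sum_colN (R : nzRingType) k (v : 'cV[R]_k) : \sum_i (- v) i 0 = - \sum_i v i 0.
Proof. by rewrite -sumrN; apply: eq_bigr => i _; rewrite mxE. Qed.

Lemma sum_mul_delta (R : nzRingType) k (x : 'I_k -> R) a :
  \sum_i x i * (i == a)%:R = x a.
Proof.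
under eq_bigr => ? _ do rewrite mulr_natr mulrb.
by rewrite -big_mkcond big_pred1_eq.
Qed.

Section Incidence.

Variables (R : nzRingType) (n m : nat) (e : edge_list n m).
Hypothesis e_loopless : loopless e.

Lemma incidenceE i k :
  incidence R e i k = (i == (e k).1)%:R - (i == (e k).2)%:R.
Proof.
rewrite mxE; have := e_loopless k.
case: (i =P (e k).1) => [i1|_]; case: (i =P (e k).2) => [i2|_] //=.
- by rewrite -i1 -i2 eqxx.
- by rewrite subr0.
- by rewrite sub0r.
- by rewrite subr0.
Qed.

Lemma row_mul_incidence (x : 'rV[R]_n) k :
  (x *m incidence R e) 0 k = x 0 (e k).1 - x 0 (e k).2.
Proof.
rewrite mxE; under eq_bigr => ? _ do rewrite incidenceE mulrBr.
by rewrite sumrB !(sum_mul_delta (x 0)).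
Qed.

Lemma ones_mul_incidence : (ones R n)^T *m incidence R e = 0.
Proof. by apply/matrixP => i k; rewrite (ord1 i) row_mul_incidence !mxE subrr. Qed.

Lemma sum_incidence_mul (x : 'cV[R]_m) : \sum_i (incidence R e *m x) i 0 = 0.
Proof. by rewrite sum_col_onesE mulmxA ones_mul_incidence mul0mx mxE. Qed.

Hypothesis e_connected : connected_graph e.

Lemma incidence_left_kernel_const (x : 'rV[R]_n) :
  x *m incidence R e = 0 -> forall i j, x 0 i = x 0 j.
Proof.
move=> xB0.
have edge_const k : x 0 (e k).1 = x 0 (e k).2.
  by apply/eqP; rewrite -subr_eq0 -row_mul_incidence xB0 mxE.
have adj_const i j : adjacent e i j -> x 0 i = x 0 j.
  by case/existsP=> k /orP[] /eqP ek; have := edge_const k; rewrite ek.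
move=> i j; have /connectP[path_ij adj_path ->] := e_connected i j.
elim: path_ij i adj_path => [|y path_ij IH] i //= /andP[adj_iy adj_path].
by rewrite (adj_const _ _ adj_iy) IH.
Qed.

End Incidence.

Lemma incidence_range (R : fieldType) n m (e : edge_list n m) :
  loopless e -> connected_graph e ->
  forall v : 'cV[R]_n, (exists lam, incidence R e *m lam = v) <-> \sum_i v i 0 = 0.
Proof.
move=> e_loopless e_connected v.
split=> [[lam <-]|v_sum0]; first exact: sum_incidence_mul.
have [n0|n_gt0] := posnP n.
  by exists 0; apply/matrixP => i; have := ltn_ord i; rewrite {2}n0.
set B := incidence R e; set i0 := Ordinal n_gt0.
have rank_ones : \rank (ones R n)^T = 1%N.
  rewrite rank_rV; case: eqP => // /matrixP /(_ 0 i0) /eqP.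
  by rewrite !mxE oner_eq0.
have Bt_sub : (B^T <= kermx (ones R n))%MS.
  apply/sub_kermxP; rewrite -[ones R n]trmxK -trmx_mul.
  by rewrite (ones_mul_incidence _ e_loopless) trmx0.
have kerB_sub : (kermx B <= (ones R n)^T)%MS.
  apply/row_subP => i.
  have : row i (kermx B) *m B = 0 by rewrite -row_mul mulmx_ker row0.
  move: (row i _) => x xB0.
  have -> : x = x 0 i0 *: (ones R n)^T.
    apply/matrixP => a b; rewrite (ord1 a) !mxE mulr1.
    exact: (incidence_left_kernel_const e_loopless e_connected xB0).
  by rewrite scalemx_sub.
have ker_sub_Bt : (kermx (ones R n) <= B^T)%MS.
  rewrite -(geq_leqif (mxrank_leqif_sup Bt_sub)) mxrank_ker mxrank_tr.
  rewrite -[\rank (ones R n)]mxrank_tr rank_ones.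
  by have := mxrankS kerB_sub; rewrite mxrank_ker rank_ones; lia.
have /submxP[lamT vE] : (v^T <= B^T)%MS.
  apply: submx_trans ker_sub_Bt; apply/sub_kermxP; apply/matrixP => a b.
  rewrite (ord1 a) (ord1 b) -[v^T *m _]trmxK trmx_mul trmxK mxE.
  by rewrite -sum_col_onesE v_sum0 mxE.
by exists lamT^T; rewrite -[v]trmxK vE trmx_mul trmxK.
Qed.

Lemma incidence_constraint_solvable (R : fieldType) n m (e : edge_list n m)
    (a b c : 'cV[R]_n) : loopless e -> connected_graph e ->
  (exists lam, 0 = a - incidence R e *m lam + b - c) <-> \sum_i (a + b - c) i 0 = 0.
Proof.
move=> e_loopless e_connected; rewrite -incidence_range //.
have rearrange lam :
    a - incidence R e *m lam + b - c = a + b - c - incidence R e *m lam.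
  by rewrite [_ + b]addrAC [a + b - _ - c]addrAC.
split=> -[lam eq_lam]; exists lam; last by rewrite rearrange eq_lam subrr.
by apply/esym/subr0_eq; rewrite -rearrange -eq_lam.
Qed.

Lemma sum_Psi (R : nzRingType) n l pc (ec : edge_list n l) (Ec : 'M[R]_(n, pc))
    h gamma eta x : loopless ec ->
  \sum_i (Psi (incidence R ec) Ec h gamma eta x) i 0
    = - \sum_i (Ec *m compw eta (Ec^T *m compw h x)) i 0.
Proof.
by move=> ec_loopless; rewrite sum_colD !sum_colN sum_incidence_mul // oppr0 add0r.
Qed.

Lemma ones_mul_Emat (R : nzRingType) n p : (p <= n)%N ->
  (ones R n)^T *m Emat R n p = (ones R p)^T.
Proof.
move=> p_le_n; apply/matrixP => a j; rewrite !mxE.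
rewrite (bigD1 (widen_ord p_le_n j)) //= big1 ?addr0 => [|i /negPf ij].
  by rewrite !mxE eqxx mulr1.
by rewrite !mxE -val_eqE /= in ij *; rewrite ij mulr0.
Qed.

Lemma sum_Emat_mul (R : nzRingType) n p (v : 'cV[R]_p) : (p <= n)%N ->
  \sum_i (Emat R n p *m v) i 0 = \sum_j v j 0.
Proof. by move=> p_le_n; rewrite !sum_col_onesE mulmxA ones_mul_Emat. Qed.

Lemma trEmat_mul_ones (R : comNzRingType) n p : (p <= n)%N ->
  (Emat R n p)^T *m ones R n = ones R p.
Proof.
by move=> p_le_n; rewrite -[ones R p]trmxK -(ones_mul_Emat _ p_le_n) trmx_mul trmxK.
Qed.

Lemma invmx_diag (R : fieldType) p (q : 'rV[R]_p) : (forall j, q 0 j != 0) ->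
  invmx (diag_mx q) = diag_mx (\row_j (q 0 j)^-1).
Proof.
move=> q_neq0; have qqV : diag_mx q *m diag_mx (\row_j (q 0 j)^-1) = 1%:M.
  apply/matrixP => i j; rewrite mul_diag_mx !mxE.
  by case: eqP => [->|]; rewrite ?mulr0 // mulr1n mulfV.
have [q_unit _] := mulmx1_unit qqV.
by rewrite -[RHS](mulKmx q_unit) qqV mulmx1.
Qed.

Lemma costC_diag (R : fieldType) p (q : 'rV[R]_p) (r : 'cV[R]_p) s v :
  costC (diag_mx q) r s v = \sum_j (q 0 j * v j 0 ^+ 2 / 2 + r j 0 * v j 0) + s.
Proof.
rewrite /costC big_split /= [X in X / 2]mxE mulr_suml [(r^T *m v) 0 0]mxE.
congr (_ + _ + _); apply: eq_bigr => j _.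
  by rewrite mul_mx_diag !mxE [v j 0 * _]mulrC expr2 mulrA.
by rewrite !mxE.
Qed.

Section HyperplaneQuadratic.

Variables (R : realFieldType) (p : nat) (q : 'rV[R]_p) (r : 'cV[R]_p) (s D : R).
Hypothesis q_gt0 : forall j, 0 < q 0 j.

Definition lagrange_multiplier : R :=
  (D + \sum_j r j 0 / q 0 j) / \sum_j (q 0 j)^-1.

Definition hyperplane_minimizer : 'cV[R]_p :=
  \col_j ((lagrange_multiplier - r j 0) / q 0 j).

Local Notation kappa := lagrange_multiplier.
Local Notation umin := hyperplane_minimizer.

Lemma hyperplane_minimizer_stationary j : q 0 j * umin j 0 + r j 0 = kappa.
Proof. by rewrite mxE mulrC divfK ?gt_eqF ?subrK. Qed.

Hypothesis p_gt0 : (0 < p)%N.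

Lemma sum_hyperplane_minimizer : \sum_j umin j 0 = D.
Proof.
have S_gt0 : 0 < \sum_j (q 0 j)^-1.
  rewrite (bigD1 (Ordinal p_gt0)) //= ltr_pwDl ?invr_gt0 //.
  by apply: sumr_ge0 => j _; rewrite invr_ge0 ltW.
under eq_bigr => j _ do rewrite mxE mulrBl.
by rewrite sumrB -mulr_sumr divfK ?gt_eqF // addrK.
Qed.

Local Notation C := (costC (diag_mx q) r s).

Lemma costC_hyperplane (v : 'cV[R]_p) : \sum_j v j 0 = D ->
  C v = C umin + \sum_j q 0 j * (v j 0 - umin j 0) ^+ 2 / 2.
Proof.
move=> v_sum; rewrite !costC_diag.
have termE j : q 0 j * v j 0 ^+ 2 / 2 + r j 0 * v j 0 =
    q 0 j * umin j 0 ^+ 2 / 2 + r j 0 * umin j 0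
    + q 0 j * (v j 0 - umin j 0) ^+ 2 / 2 + kappa * (v j 0 - umin j 0).
  by rewrite -(hyperplane_minimizer_stationary j); field.
under eq_bigr => j _ do rewrite termE.
rewrite !big_split /= -mulr_sumr sumrB v_sum sum_hyperplane_minimizer subrr.
by rewrite mulr0 addr0 [RHS]addrAC.
Qed.

Lemma hyperplane_argmin (u : 'cV[R]_p) :
  (\sum_j u j 0 = D /\ forall v : 'cV[R]_p, \sum_j v j 0 = D -> C u <= C v)
  <-> u = umin.
Proof.
have dev_ge0 (v : 'cV[R]_p) j : 0 <= q 0 j * (v j 0 - umin j 0) ^+ 2 / 2.
  exact: divr_ge0 (mulr_ge0 (ltW (q_gt0 j)) (sqr_ge0 _)) (ler0n _ 2).
split=> [[u_sum u_min]|->]; last first.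
  split=> [|v v_sum]; first exact: sum_hyperplane_minimizer.
  by rewrite (costC_hyperplane v_sum) lerDl sumr_ge0.
have := u_min _ sum_hyperplane_minimizer.
rewrite (costC_hyperplane u_sum) gerDl => dev_le0.
have dev0 : \sum_j q 0 j * (u j 0 - umin j 0) ^+ 2 / 2 = 0.
  by apply/eqP; rewrite eq_le dev_le0 sumr_ge0.
apply/matrixP => j k; rewrite (ord1 k); apply/eqP.
have /eqP := psumr_eq0P (fun j _ => dev_ge0 u j) dev0 (i := j) isT.
by rewrite !mulf_eq0 invr_eq0 pnatr_eq0 gt_eqF //= orbF orbb subr_eq0.
Qed.

End HyperplaneQuadratic.


Lemma closed_form_hyperplane_minimizer (R : realFieldType) n p (q : 'rV[R]_p)
    (r : 'cV[R]_p) (w : 'cV[R]_n) : (p <= n)%N -> (forall j, 0 < q 0 j) ->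
  let Q := diag_mx q in let E := Emat R n p in
  invmx Q *m ((((ones R p)^T *m invmx Q *m ones R p) 0 0)^-1
      *: (E^T *m (ones R n *m (ones R n)^T) *m (w + E *m invmx Q *m r)) - r)
    = hyperplane_minimizer q r (\sum_i w i 0).
Proof.
move=> p_le_n q_gt0 Q E.
have invQ : invmx Q = diag_mx (\row_j (q 0 j)^-1).
  by apply: invmx_diag => j; rewrite gt_eqF.
have sum_invQ (x : 'cV[R]_p) :
    ((ones R p)^T *m invmx Q *m x) 0 0 = \sum_j x j 0 / q 0 j.
  rewrite -mulmxA -sum_col_onesE invQ.
  by apply: eq_bigr => j _; rewrite mul_diag_mx !mxE mulrC.
have sum_rhs : (ones R n)^T *m (w + E *m invmx Q *m r)
    = (\sum_i w i 0 + \sum_j r j 0 / q 0 j)%:M.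
  rewrite [LHS]mx11_scalar mulmxDr mxE -sum_col_onesE -sum_invQ !mulmxA.
  by rewrite ones_mul_Emat.
have kappaE : (((ones R p)^T *m invmx Q *m ones R p) 0 0)^-1
      *: (E^T *m (ones R n *m (ones R n)^T) *m (w + E *m invmx Q *m r))
    = lagrange_multiplier q r (\sum_i w i 0) *: ones R p.
  rewrite sum_invQ mulmxA trEmat_mul_ones // -mulmxA sum_rhs.
  rewrite mul_mx_scalar scalerA mulrC /lagrange_multiplier.
  by congr (_ / _ *: _); apply: eq_bigr => j _; rewrite /ones mxE div1r.
apply/matrixP => j k; rewrite (ord1 k) kappaE invQ mul_diag_mx !mxE.
by rewrite mulr1 mulrC.
Qed.

Theorem lemma8 (R : realFieldType) (n m p l pc : nat)
  (e : edge_list n m) (ec : edge_list n l) (sel : 'I_pc -> 'I_n)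
  (q : 'rV[R]_p) (r : 'cV[R]_p) (s : R) (d : 'cV[R]_n)
  (h : 'I_n -> R -> R) (gamma : 'I_l -> R -> R) (eta : 'I_pc -> R -> R)
  (xbar : 'cV[R]_n) :
  simple_graph e -> connected_graph e ->
  simple_graph ec ->
  injective sel ->
  (1 <= p)%N -> (p <= n)%N ->
  (forall i, 0 < q ord0 i) ->
  let B := incidence R e in
  let E := Emat R n p in
  let Bc := incidence R ec in
  let Ec := unit_cols R sel in
  let Q := diag_mx q in
  let C := costC Q r s in
  let feasible (u : 'cV[R]_p) :=
    exists lambda : 'cV[R]_m,
      0 = Psi Bc Ec h gamma eta xbar - B *m lambda + E *m u - d in
  let dhat := d + Ec *m compw eta (Ec^T *m compw h xbar) in
  let kappahat :=
    (((ones R p)^T *m invmx Q *m ones R p) ord0 ord0)^-1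
      *: (E^T *m (ones R n *m (ones R n)^T) *m (dhat + E *m invmx Q *m r)) in
  let uhat := invmx Q *m (kappahat - r) in
  forall u : 'cV[R]_p,
    (feasible u /\ (forall v, feasible v -> C u <= C v)) <-> u = uhat.
Proof.
move=> /simple_graph_loopless e_loopless e_connected
  /simple_graph_loopless ec_loopless _ p_gt0 p_le_n q_gt0
  B E Bc Ec Q C feasible dhat kappahat uhat u.
set D := \sum_i dhat i 0.
have feasibleE v : feasible v <-> \sum_j v j 0 = D.
  rewrite /feasible incidence_constraint_solvable // sum_colD sum_colN sum_colD.
  rewrite sum_Psi // sum_Emat_mul // /D sum_colD [- _ + _]addrC -addrA -opprD.
  by rewrite [\sum_i d i 0 + _]addrC; split=> [/subr0_eq|->]; rewrite ?subrr.
rewrite /uhat /kappahat closed_form_hyperplane_minimizer // -/D.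
rewrite -(hyperplane_argmin r s D q_gt0 p_gt0).
by split=> -[u_feas u_min]; split=> [|v v_feas];
  apply/feasibleE || apply/u_min/feasibleE.
Qed.
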